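(* Let $\mathcal{P} \subseteq \{2,3,4,\dots\}$ be nonempty and suppose $\rho(\mathcal{P})$ (defined in the context) exists. Then for every integer $n \geq 1$, $$H(n,\mathcal{P}) \leq n^{\rho(\mathcal{P})}.$$
   Context: For $\mathcal{P} \subseteq \{2,3,\dots\}$, $H(n,\mathcal{P})$ denotes the number of ordered factorizations of $n$ into factors that all belong to $\mathcal{P}$: $H(1,\mathcal{P})=1$ and, for $n\ge 2$, $H(n,\mathcal{P})=\sum_{k\ge1} \#\{(d_1,\dots,d_k): d_1\cdots d_k=n,\ d_i\in\mathcal{P}\}$. Equivalently, $H(n,\mathcal{P})=\sum_{d\mid n,\ d\in\mathcal{P}} H(n/d,\mathcal{P})$ for $n\ge2$. Let $\zeta_\mathcal{P}(s)=\sum_{m\in\mathcal{P}} m^{-s}$ with abscissa of convergence $\sigma_\mathcal{P}$ ($\sigma_\mathcal{P}=-\infty$ if $\mathcal{P}$ is finite). For real $s\ge 0$ in the region of convergence, $\zeta_\mathcal{P}(s)$ is strictly decreasing and tends to $0$ as $s\to\infty$; $\rho(\mathcal{P})$ denotes the unique real $s\geq 0$ (with $s>\sigma_\mathcal{P}$, or at which the series converges) such that $\zeta_\mathcal{P}(s)=1$. *)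

From Stdlib Require Import Reals Arith List.
From Coquelicot Require Import Coquelicot.
Import ListNotations.
Open Scope R_scope.

(* Fuel-based evaluation of the recursion
   H(1) = 1,  H(n) = sum_{d | n, d in P} H(n/d)  (n >= 2).
   Divisors d of n in P satisfy 2 <= d <= n when P ⊆ {2,3,...}. *)
Fixpoint Hfuel (P : nat -> bool) (fuel n : nat) : nat :=
  match fuel with
  | O => if Nat.eqb n 1 then 1%nat else 0%nat
  | S f =>
      if Nat.eqb n 1 then 1%nat
      else fold_right Nat.add 0%nat
             (map (fun d => if andb (Nat.eqb (n mod d) 0) (P d)
                            then Hfuel P f (n / d) else 0%nat)
                  (seq 2 (n - 1)))
  end.

(* H(n,P): the number of ordered factorizations of n into factors in P.
   Each factor is >= 2, so recursion depth is < n and fuel n suffices. *)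
Definition H (P : nat -> bool) (n : nat) : nat := Hfuel P n n.

(* The summand sequence of zeta_P(s) = sum_{m in P} m^{-s}. *)
Definition zetaP_term (P : nat -> bool) (s : R) (m : nat) : R :=
  if P m then Rpower (INR m) (- s) else 0.

Example H_test : H (fun m => Nat.leb 2 m) 12 = 8%nat. Proof. reflexivity. Qed.

(* Strong induction along the defining recursion: for n >= 2,
   H(n) = sum_{d | n, d in P} H(n/d) <= sum_{d | n, d in P} (n/d)^rho
        = n^rho sum_{d | n, d in P} d^-rho <= n^rho zeta_P(rho) = n^rho,
   and H(1) = 1 = 1^rho. *)

From Stdlib Require Import Reals List Lia Lra.
From Coquelicot Require Import Coquelicot.
Open Scope R_scope.

Lemma Rpower_1_l (r : R) : Rpower 1 r = 1.
Proof. unfold Rpower. rewrite ln_1, Rmult_0_r. apply exp_0. Qed.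

Lemma Rpower_pos (x r : R) : 0 < Rpower x r.
Proof. apply exp_pos. Qed.

Lemma Rpower_quotient (d q r : R) : 0 < d -> 0 < q ->
  Rpower q r = Rpower (d * q) r * Rpower d (- r).
Proof.
  intros Hd Hq.
  rewrite <- Rpower_mult_distr by assumption.
  rewrite (Rmult_comm (Rpower d r)), Rmult_assoc, <- Rpower_plus.
  replace (r + - r) with 0 by ring.
  rewrite Rpower_O by assumption. ring.
Qed.

Lemma INR_fold_right_add_seq (g : nat -> nat) (m n : nat) :
  INR (fold_right Nat.add 0%nat (map g (seq m (S n - m)))) =
  sum_n_m (fun k => INR (g k)) m n.
Proof.
  unfold sum_n_m, Iter.iter_nat. change (seq.iota m (S n - m)) with (seq m (S n - m)).
  induction (seq m (S n - m)) as [|k l IH]; simpl; [reflexivity|].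
  rewrite plus_INR, IH. reflexivity.
Qed.

Lemma sum_n_nonneg (a : nat -> R) (n : nat) :
  (forall k, 0 <= a k) -> 0 <= sum_n a n.
Proof.
  intros Ha.
  assert (H0 : sum_n_m (fun _ => 0) 0 n = 0)
    by exact (sum_n_m_const_zero (G := R_AbelianMonoid) 0 n).
  rewrite <- H0. apply sum_n_m_le. exact Ha.
Qed.

Lemma sum_n_m_le_series (a : nat -> R) (l : R) (m n : nat) :
  (forall k, 0 <= a k) -> is_series a l -> (m <= n)%nat ->
  sum_n_m a (S m) n <= l.
Proof.
  intros Ha Hl Hmn.
  rewrite (sum_n_m_sum_n (G := R_AbelianGroup)) by exact Hmn.
  pose proof (sum_n_nonneg a m Ha) as Hm.
  assert (Hn : sum_n a n <= l).
  { apply (is_lim_seq_incr_compare (sum_n a)); [exact Hl|].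
    intros k. rewrite sum_Sn. specialize (Ha (S k)). unfold plus; simpl. lra. }
  change (sum_n a n - sum_n a m <= l). lra.
Qed.

Section DivisorRecursion.

Variable P : nat -> bool.
Hypothesis P_ge2 : forall m : nat, P m = true -> (2 <= m)%nat.

Definition Hfuel_summand (f n d : nat) : nat :=
  if andb (Nat.eqb (n mod d) 0) (P d) then Hfuel P f (n / d) else 0%nat.

Lemma Hfuel_S_sum (f n : nat) : n <> 1%nat ->
  INR (Hfuel P (S f) n) = sum_n_m (fun d => INR (Hfuel_summand f n d)) 2 n.
Proof.
  intros Hn1. simpl Hfuel. apply Nat.eqb_neq in Hn1. rewrite Hn1.
  exact (INR_fold_right_add_seq (Hfuel_summand f n) 2 n).
Qed.

Variable rho : R.

Lemma zetaP_term_nonneg (d : nat) : 0 <= zetaP_term P rho d.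
Proof.
  unfold zetaP_term. destruct (P d); [left; apply Rpower_pos | apply Rle_refl].
Qed.

Lemma Hfuel_summand_le (f n d : nat) : (1 <= n)%nat ->
  (forall q, (1 <= q)%nat -> INR (Hfuel P f q) <= Rpower (INR q) rho) ->
  INR (Hfuel_summand f n d) <= Rpower (INR n) rho * zetaP_term P rho d.
Proof.
  intros Hn1 IH. unfold Hfuel_summand.
  destruct (Nat.eqb_spec (n mod d) 0) as [Hdvd|_]; simpl;
    [destruct (P d) eqn:HPd|];
    try (apply Rmult_le_pos; [left; apply Rpower_pos | apply zetaP_term_nonneg]).
  - unfold zetaP_term. rewrite HPd.
    pose proof (P_ge2 d HPd) as Hd2.
    assert (Hn : n = (d * (n / d))%nat) by (apply Nat.Div0.div_exact; exact Hdvd).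
    assert (Hq : (1 <= n / d)%nat).
    { destruct (n / d)%nat; [rewrite Nat.mul_0_r in Hn|]; lia. }
    eapply Rle_trans; [apply IH; exact Hq|].
    rewrite Hn at 2. rewrite mult_INR.
    apply Req_le, Rpower_quotient; apply lt_0_INR; lia.
Qed.

Lemma Hfuel_le_Rpower (Hzeta : is_series (zetaP_term P rho) 1) (f n : nat) :
  (1 <= n)%nat -> INR (Hfuel P f n) <= Rpower (INR n) rho.
Proof.
  revert n. induction f as [|f IH]; intros n Hn;
    destruct (Nat.eq_dec n 1) as [->|Hn1].
  - simpl. rewrite Rpower_1_l. lra.
  - simpl. apply Nat.eqb_neq in Hn1. rewrite Hn1. left; apply Rpower_pos.
  - simpl. rewrite Rpower_1_l. lra.
  - rewrite Hfuel_S_sum by exact Hn1.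
    eapply Rle_trans.
    { apply sum_n_m_le. intros d. apply Hfuel_summand_le; assumption. }
    rewrite (sum_n_m_mult_l (K := R_Ring)). unfold mult; simpl.
    rewrite <- (Rmult_1_r (Rpower (INR n) rho)) at 2.
    apply Rmult_le_compat_l; [left; apply Rpower_pos|].
    apply sum_n_m_le_series; [exact zetaP_term_nonneg | exact Hzeta | lia].
Qed.

End DivisorRecursion.

Theorem lemma2p1 (P : nat -> bool)
  (HP2 : forall m : nat, P m = true -> (2 <= m)%nat)
  (Hne : exists m : nat, P m = true)
  (rho : R) (Hrho0 : 0 <= rho)
  (Hrho : is_series (zetaP_term P rho) 1) :
  forall n : nat, (1 <= n)%nat -> INR (H P n) <= Rpower (INR n) rho.
Proof.
  intros n Hn. exact (Hfuel_le_Rpower P HP2 rho Hrho n n Hn).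
Qed.
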